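(* Let $M\in\mathrm{Mat}(d,\mathbb{Z})$ with $D=\det(M)$, and let $r\in\mathbb{N}$. (a) Let $p\neq2$ be a prime. If $M$ is reversible mod $p^r$, then $D\equiv\pm1\pmod{p^r}$. If $d=2$, then $M$ is reversible mod $p^r$ if and only if $D\equiv1\pmod{p^r}$ or $M^2\equiv\mathbb{1}\pmod{p^r}$. (b) If $M$ is reversible mod $2^r$, then $D\equiv\pm1\pmod{2^{r-1}}$. If moreover $d=2$, $r\ge2$, $M$ is reversible mod $2^r$ and $D\equiv-1\pmod{2^{r-1}}$, then $M^2\equiv\mathbb{1}\pmod{2^{r-2}}$.
   Context: An integer matrix $M$ whose determinant is a unit mod $n$ is reversible mod $n$ if there exists $R\in\mathrm{GL}(d,\mathbb{Z}/n\mathbb{Z})$ with $RMR^{-1}\equiv M^{-1}\pmod n$, where $M^{-1}$ is the inverse of $M$ over $\mathbb{Z}/n\mathbb{Z}$. *)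

From HB Require Import structures.
From mathcomp Require Import all_boot all_order all_algebra.
Set Implicit Arguments. Unset Strict Implicit. Unset Printing Implicit Defensive.
Import GRing.Theory Num.Theory.
Local Open Scope ring_scope.

Definition mxcong (n : nat) (d : nat) (A B : 'M[int]_d) : Prop :=
  forall i j, (A i j = B i j %[mod (n%:Z)])%Z.

(* Elements of Z/nZ (and GL(d,Z/nZ)) are represented by integer
   lifts; Rinv, Minv are integer lifts of the inverses mod n.  The existence
   of Minv is exactly the requirement that det M is a unit mod n. *)
Definition reversible_mod (n : nat) (d : nat) (M : 'M[int]_d) : Prop :=
  exists R Rinv Minv : 'M[int]_d,
    [/\ mxcong n (R *m Rinv) 1%:M, mxcong n (Rinv *m R) 1%:M,
        mxcong n (M *m Minv) 1%:M, mxcong n (Minv *m M) 1%:M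
      & mxcong n (R *m M *m Rinv) Minv].

From HB Require Import structures.
From mathcomp Require Import all_boot all_order all_algebra.
From mathcomp Require Import ring.
Set Implicit Arguments.
Unset Strict Implicit.
Unset Printing Implicit Defensive.
Import GRing.Theory Num.Theory.
Local Open Scope ring_scope.

(* Conjugating M to its inverse gives det M = det M^-1, i.e. (det M)^2 = 1 mod n;
   modulo p^r the square roots of 1 are +-1 for odd p, and modulo 2^r they are
   +-1 modulo 2^(r-1).  For d = 2 the adjugate is tr M - M (Cayley-Hamilton).
   If det M = -1, then M^-1 = -adj M has trace -tr M, whereas conjugation
   preserves the trace; so 2 tr M = 0, and M^2 = tr M * M - det M becomes 1.
   Conversely, if det M = 1 then M^-1 = adj M, and a trace-zero matrix
   R = [[x, y], [z, -x]] satisfies R M = adj M R iff one linear equation in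
   x, y, z holds; it has a solution with p not dividing x^2 + y z = -det R,
   so R is invertible mod p^r.  If instead M^2 = 1, take R = 1. *)

Lemma coprimez_pexp p r (y : int) : prime p -> ~~ (p%:Z %| y)%Z ->
  coprimez (p ^ r)%N%:Z y.
Proof.
by move=> p_pr p_ndvd_y; rewrite coprimezE /= coprimeXl // prime_coprime // -dvdzE.
Qed.

Lemma dvdz_pexp_mulr p r (x y : int) : prime p -> ~~ (p%:Z %| y)%Z ->
  ((p ^ r)%N%:Z %| x * y)%Z = ((p ^ r)%N%:Z %| x)%Z.
Proof. by move=> p_pr p_ndvd_y; apply/Gauss_dvdzl/coprimez_pexp. Qed.

Lemma sqrz_eq1_mod_pexp p r (D : int) : prime p -> p != 2%N ->
  (D * D = 1 %[mod (p ^ r)%N%:Z])%Z ->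
  (D = 1 %[mod (p ^ r)%N%:Z])%Z \/ (D = -1 %[mod (p ^ r)%N%:Z])%Z.
Proof.
move=> p_pr p_odd /eqP; rewrite eqz_mod_dvd.
have -> : D * D - 1 = (D - 1) * (D + 1) by ring.
have p_ndvd2 : ~~ (p%:Z %| 2)%Z by rewrite dvdzE /= dvdn_prime2.
have [p_dvd_Dm1 | p_ndvd_Dm1] := boolP (p%:Z %| D - 1)%Z.
  have p_ndvd_Dp1 : ~~ (p%:Z %| D + 1)%Z.
    apply: contra p_ndvd2 => p_dvd_Dp1.
    have -> : 2 = (D + 1) - (D - 1) :> int by ring.
    by rewrite rpredB.
  by rewrite dvdz_pexp_mulr // => ?; left; apply/eqP; rewrite eqz_mod_dvd.
by rewrite mulrC dvdz_pexp_mulr // => ?; right; apply/eqP; rewrite eqz_mod_dvd opprK.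
Qed.

Lemma sqrz_eq1_mod_2exp r (D : int) :
  (D * D = 1 %[mod (2 ^ r)%N%:Z])%Z ->
  (D = 1 %[mod (2 ^ (r - 1))%N%:Z])%Z \/ (D = -1 %[mod (2 ^ (r - 1))%N%:Z])%Z.
Proof.
case: r => [|[|k]]; try by rewrite !modz1; left.
rewrite subSS subn0 => /eqP; rewrite eqz_mod_dvd.
have -> : D * D - 1 = (D - 1) * (D + 1) by ring.
move=> dvd_prod.
have /dvdzP[a Dm1E] : (2 %| D - 1)%Z.
  have : (2 %| (D - 1) * (D + 1))%Z.
    by apply: dvdz_trans dvd_prod; rewrite dvdzE /= !expnS dvdn_mulr.
  rewrite dvdzE abszM Euclid_dvdM // -!dvdzE => /orP[// | two_dvd_Dp1].
  have -> : D - 1 = (D + 1) - 2 by ring.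
  by rewrite rpredB.
have Dp1E : D + 1 = (a + 1) * 2 by rewrite -[D](subrK 1) Dm1E; ring.
have two_exp_SS : (2 ^ k.+2)%N%:Z = (2 ^ k)%N%:Z * 4.
  by rewrite !expnS PoszM [in RHS]mulrC !PoszM mulrA.
have two_exp_S : (2 ^ k.+1)%N%:Z = (2 ^ k)%N%:Z * 2 by rewrite expnS PoszM mulrC.
move: dvd_prod; rewrite Dm1E Dp1E two_exp_SS.
have -> : a * 2 * ((a + 1) * 2) = a * (a + 1) * 4 by ring.
rewrite dvdz_mul2r // => dvd_aa1.
have [two_dvd_a | two_ndvd_a] := boolP (2 %| a)%Z.
  have two_ndvd_a1 : ~~ (2 %| a + 1)%Z.
    apply/negP => two_dvd_a1.
    have : (2 %| (a + 1) - a)%Z by rewrite rpredB.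
    by rewrite addrAC subrr add0r.
  move: dvd_aa1; rewrite dvdz_pexp_mulr // => ?.
  by left; apply/eqP; rewrite eqz_mod_dvd Dm1E two_exp_S dvdz_mul2r.
move: dvd_aa1; rewrite mulrC dvdz_pexp_mulr // => ?.
by right; apply/eqP; rewrite eqz_mod_dvd opprK Dp1E two_exp_S dvdz_mul2r.
Qed.

Definition mx2 {T : Type} (a b c e : T) : 'M[T]_2 :=
  \matrix_(i, j) if i == ord0 then (if j == ord0 then a else b)
                 else (if j == ord0 then c else e).

Lemma mx2_eta {T : Type} (A : 'M[T]_2) :
  A = mx2 (A ord0 ord0) (A ord0 ord_max) (A ord_max ord0) (A ord_max ord_max).
Proof.
apply/matrixP=> i j; rewrite mxE.
by case: i => [[|[|i]] ?]; case: j => [[|[|j]] ?] //=; congr (A _ _); apply: val_inj.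
Qed.

Section TwoByTwo.
Variable T : comPzRingType.
Implicit Types A : 'M[T]_2.

Lemma mx2_mul (a b c e a' b' c' e' : T) :
  mx2 a b c e *m mx2 a' b' c' e' =
  mx2 (a * a' + b * c') (a * b' + b * e') (c * a' + e * c') (c * b' + e * e').
Proof.
apply/matrixP=> i j; rewrite !mxE !big_ord_recl big_ord0 !mxE /=.
by case: i => [[|[|i]] ?]; case: j => [[|[|j]] ?] //=; rewrite addr0.
Qed.

Lemma det_mx2 (a b c e : T) : \det (mx2 a b c e) = a * e - b * c.
Proof.
rewrite (expand_det_row _ ord0) !big_ord_recl big_ord0 /cofactor !det_mx11 !mxE /=.
by rewrite expr0 expr1; ring.
Qed.

Lemma tr_mx2 (a b c e : T) : \tr (mx2 a b c e) = a + e.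
Proof. by rewrite /mxtrace !big_ord_recl big_ord0 !mxE /= addr0. Qed.

Lemma adj_mx2 (a b c e : T) : \adj (mx2 a b c e) = mx2 e (- b) (- c) a.
Proof.
apply/matrixP=> i j; rewrite !mxE /cofactor det_mx11 !mxE.
case: i => [[|[|i]] ?]; case: j => [[|[|j]] ?] //=;
  by rewrite -signr_odd /= ?mul1r ?mulN1r.
Qed.

Lemma adj_mx2_tr A : \adj A = (\tr A)%:M - A.
Proof.
rewrite [in LHS](mx2_eta A) [in RHS](mx2_eta A) adj_mx2 tr_mx2.
apply/matrixP=> i j; rewrite !mxE.
by case: i => [[|[|i]] ?]; case: j => [[|[|j]] ?] //=; rewrite ?subrr ?sub0r //; ring.
Qed.

Lemma mxtrace_adj_mx2 A : \tr (\adj A) = \tr A.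
Proof. by rewrite adj_mx2_tr raddfB /= mxtrace_scalar mulr2n addrK. Qed.

Lemma Cayley_Hamilton_mx2 A : A *m A = \tr A *: A - (\det A)%:M.
Proof.
apply/eqP; rewrite eq_sym subr_eq -mul_mx_adj adj_mx2_tr mulmxBr.
by rewrite mul_mx_scalar addrC subrK.
Qed.

End TwoByTwo.

Section ConjugateToInverse.
Variables (T : comPzRingType) (d : nat) (M R Ri Mi : 'M[T]_d).
Hypotheses (RiR : Ri *m R = 1%:M) (MiM : Mi *m M = 1%:M) (conjM : R *m M *m Ri = Mi).

Lemma conj_inv_det_sqr : \det M * \det M = 1.
Proof.
have detRiR : \det Ri * \det R = 1 by rewrite -det_mulmx RiR det1.
have := congr1 determinant MiM; rewrite -conjM !det_mulmx det1 => <-.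
by rewrite -[LHS]mul1r -detRiR; ring.
Qed.

End ConjugateToInverse.

Lemma conj_inv_mx2_trace (T : comPzRingType) (M R Ri Mi : 'M[T]_2) :
  Ri *m R = 1%:M -> Mi *m M = 1%:M -> R *m M *m Ri = Mi ->
  \det M = -1 -> \tr M *+ 2 = 0.
Proof.
move=> RiR MiM conjM det_m1.
have adjM : \adj M = - Mi.
  rewrite -[\adj M]mul1mx -MiM -mulmxA mul_mx_adj det_m1 mul_mx_scalar.
  by rewrite scaleN1r.
have trMi : \tr Mi = \tr M by rewrite -conjM mxtrace_mulC mulmxA RiR mul1mx.
have := mxtrace_adj_mx2 M; rewrite adjM raddfN /= trMi => /eqP.
by rewrite eq_sym -addr_eq0 -mulr2n => /eqP.
Qed.

Lemma mxtrace_map (U V : pzRingType) (f : {additive U -> V}) d (A : 'M[U]_d) :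
  \tr (map_mx f A) = f (\tr A).
Proof. by rewrite /mxtrace raddf_sum; apply: eq_bigr => i _; rewrite mxE. Qed.

(* 'Z_n is Z/2 for n <= 1, hence the hypothesis 1 < n. *)
Section ReductionModn.
Variables (n : nat) (n_gt1 : (1 < n)%N).

Lemma intr_Zp_eq0 (z : int) : ((z%:~R : 'Z_n) == 0) = (n%:Z %| z)%Z.
Proof.
case: z => m; rewrite ?NegzE ?mulrNz ?oppr_eq0 -pmulrn dvdzE -(inj_eq val_inj) /=;
  by rewrite (val_Zp_nat n_gt1).
Qed.

Lemma intr_Zp_eqE (a b : int) :
  (a%:~R == b%:~R :> 'Z_n) = (a == b %[mod n%:Z])%Z.
Proof. by rewrite eqz_mod_dvd -intr_Zp_eq0 intrB subr_eq0. Qed.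

Lemma mxcong_Zp d (A B : 'M[int]_d) :
  mxcong n A B <-> map_mx intr A = map_mx intr B :> 'M['Z_n]_d.
Proof.
split=> [congAB | eqAB i j].
  by apply/matrixP=> i j; rewrite !mxE; apply/eqP; rewrite intr_Zp_eqE; apply/eqP.
move/matrixP: eqAB => /(_ i j); rewrite !mxE => /eqP.
by rewrite intr_Zp_eqE => /eqP.
Qed.

Lemma reversible_mod_Zp d (M : 'M[int]_d) : reversible_mod n M ->
  exists R Ri Mi : 'M['Z_n]_d, [/\ Ri *m R = 1%:M,
    Mi *m map_mx intr M = 1%:M & R *m map_mx intr M *m Ri = Mi].
Proof.
case=> [R [Ri [Mi [_ /mxcong_Zp RiR _ /mxcong_Zp MiM /mxcong_Zp conjM]]]].
exists (map_mx intr R), (map_mx intr Ri), (map_mx intr Mi).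
by rewrite !map_mxM map_mx1 in RiR MiM conjM.
Qed.

End ReductionModn.

Lemma reversible_mod_det_sqr n d (M : 'M[int]_d) : (0 < n)%N ->
  reversible_mod n M -> (\det M * \det M = 1 %[mod n%:Z])%Z.
Proof.
move=> n_gt0 revM; have [n_le1 | n_gt1] := leqP n 1.
  have -> : n = 1%N by apply/eqP; rewrite eqn_leq n_le1.
  by rewrite !modz1.
have [R [Ri [Mi [RiR MiM conjM]]]] := reversible_mod_Zp n_gt1 revM.
apply/eqP; rewrite -(intr_Zp_eqE n_gt1) intrM -det_map_mx.
by rewrite (conj_inv_det_sqr RiR MiM conjM).
Qed.

Lemma reversible_mod_mx2_trace n (M : 'M[int]_2) : (0 < n)%N ->
  reversible_mod n M -> (\det M = -1 %[mod n%:Z])%Z -> (n%:Z %| \tr M * 2)%Z.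
Proof.
move=> n_gt0 revM /eqP det_m1; have [n_le1 | n_gt1] := leqP n 1.
  have -> : n = 1%N by apply/eqP; rewrite eqn_leq n_le1.
  exact: dvd1z.
have [R [Ri [Mi [RiR MiM conjM]]]] := reversible_mod_Zp n_gt1 revM.
rewrite -(intr_Zp_eqE n_gt1) -det_map_mx in det_m1.
rewrite -(intr_Zp_eq0 n_gt1) intrM -mxtrace_map.
rewrite pmulrn mulr_natr (conj_inv_mx2_trace RiR MiM conjM) //.
by rewrite (eqP det_m1) mulrN1z.
Qed.

Lemma eqz_mod_dvdW (m n : nat) (a b : int) :
  (m %| n)%N -> (a = b %[mod n%:Z])%Z -> (a = b %[mod m%:Z])%Z.
Proof.
move=> m_dvd_n /eqP; rewrite eqz_mod_dvd => n_dvd_ab.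
by apply/eqP; rewrite eqz_mod_dvd (dvdz_trans _ n_dvd_ab) // dvdzE.
Qed.

Lemma mxcong_dvd m n d (A B : 'M[int]_d) :
  (m %| n)%N -> mxcong n A B -> mxcong m A B.
Proof. by move=> m_dvd_n congAB i j; apply: eqz_mod_dvdW (congAB i j). Qed.

Lemma reversible_mod_dvd m n d (M : 'M[int]_d) :
  (m %| n)%N -> reversible_mod n M -> reversible_mod m M.
Proof.
move=> m_dvd_n [R [Ri [Mi [RRi RiR MMi MiM conjM]]]]; exists R, Ri, Mi.
by split; apply: mxcong_dvd m_dvd_n _.
Qed.

Lemma mxcong_scale1 n d (c : int) (A : 'M[int]_d) :
  (c = 1 %[mod n%:Z])%Z -> mxcong n (c *: A) A.
Proof. by move=> c1 i j; rewrite mxE -modzMml c1 modzMml mul1r. Qed.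

Lemma mxcong_scalar1 n d (c : int) :
  (c = 1 %[mod n%:Z])%Z -> mxcong n (c%:M : 'M_d) 1%:M.
Proof. by move=> c1; rewrite -[c%:M]scalemx1; exact: mxcong_scale1. Qed.

Lemma mxcong_Cayley_Hamilton_mx21 n (M : 'M[int]_2) : (n%:Z %| \tr M)%Z ->
  (\det M = -1 %[mod n%:Z])%Z -> mxcong n (M *m M) 1%:M.
Proof.
move=> n_dvd_tr /eqP; rewrite eqz_mod_dvd opprK => n_dvd_det i j.
apply/eqP; rewrite Cayley_Hamilton_mx2 !mxE eqz_mod_dvd -addrA -opprD -mulrnDl.
by rewrite rpredB ?dvdz_mulr // rpredMn.
Qed.

Lemma reversible_mod_of_sqr1 n d (M : 'M[int]_d) :
  mxcong n (M *m M) 1%:M -> reversible_mod n M.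
Proof. by move=> sqrM; exists 1%:M, 1%:M, M; rewrite !mul1mx !mulmx1. Qed.

Lemma reversible_mod_of_conj_adj n d (M R : 'M[int]_d) (k : int) :
  R *m M = \adj M *m R -> R *m R = k%:M -> coprimez n%:Z k ->
  (\det M = 1 %[mod n%:Z])%Z -> reversible_mod n M.
Proof.
move=> conjR sqrR; rewrite coprimez_sym => /eqP coprime_kn det1.
have [u [v Bez]] := Bezoutz k n%:Z; rewrite coprime_kn in Bez.
have uk1 : (u * k = 1 %[mod n%:Z])%Z by rewrite -Bez addrC modzMDl.
have RuR : R *m (u *: R) = (u * k)%:M by rewrite -scalemxAr sqrR scale_scalar_mx.
have uRR : (u *: R) *m R = (u * k)%:M by rewrite -scalemxAl sqrR scale_scalar_mx.
exists R, (u *: R), (\adj M); split.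
- by rewrite RuR; exact: mxcong_scalar1.
- by rewrite uRR; exact: mxcong_scalar1.
- by rewrite (mul_mx_adj M); exact: mxcong_scalar1.
- by rewrite (mul_adj_mx M); exact: mxcong_scalar1.
- by rewrite conjR -mulmxA RuR mul_mx_scalar; exact: mxcong_scale1 _ uk1.
Qed.

Lemma mx2_conj_adj (T : comPzRingType) (a b c e x y z : T) :
  (a - e) * x + c * y + b * z = 0 ->
  mx2 x y z (- x) *m mx2 a b c e = \adj (mx2 a b c e) *m mx2 x y z (- x).
Proof.
move=> eq_xyz; rewrite adj_mx2 !mx2_mul; congr mx2; try ring.
all: by apply/eqP; rewrite -subr_eq0 -eq_xyz; apply/eqP; ring.
Qed.

Lemma sqr_mx2_tr0 (T : comPzRingType) (x y z : T) :
  mx2 x y z (- x) *m mx2 x y z (- x) = (x * x + y * z)%:M.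
Proof.
rewrite Cayley_Hamilton_mx2 tr_mx2 det_mx2 subrr scale0r sub0r -raddfN /=.
by congr _%:M; ring.
Qed.

Lemma dvdz_prime_sqr p (x : int) : prime p -> (p%:Z %| x * x)%Z = (p%:Z %| x)%Z.
Proof. by move=> p_pr; rewrite !dvdzE abszM Euclid_dvdM // orbb. Qed.

(* A solution gives the invertible conjugator mx2 x y z (-x) of mx2_conj_adj
   with u = a - e. *)
Lemma exists_nondegenerate_solution_primitive p (u b c : int) : prime p ->
  ~~ [&& p%:Z %| u, p%:Z %| b & p%:Z %| c]%Z ->
  exists x y z : int, u * x + c * y + b * z = 0 /\ ~~ (p%:Z %| x * x + y * z)%Z.
Proof.
move=> p_pr.
have [p_dvd_b | p_ndvd_b] := boolP (p%:Z %| b)%Z; last first.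
  by move=> _; exists b, 0, (- u); split; [ring | rewrite mul0r addr0 dvdz_prime_sqr].
have [p_dvd_c | p_ndvd_c] := boolP (p%:Z %| c)%Z; last first.
  by move=> _; exists c, (- u), 0; split; [ring | rewrite mulr0 addr0 dvdz_prime_sqr].
rewrite !andbT => p_ndvd_u.
exists (b - c), u, (- u); split; first ring.
apply: contra p_ndvd_u => p_dvd_Q.
rewrite -dvdz_prime_sqr //.
have -> : u * u = (b - c) * (b - c) - ((b - c) * (b - c) + u * - u) by ring.
by rewrite rpredB // dvdz_mulr // rpredB.
Qed.

Lemma exists_nondegenerate_solution p (u b c : int) : prime p ->
  exists x y z : int, u * x + c * y + b * z = 0 /\ ~~ (p%:Z %| x * x + y * z)%Z.
Proof.
move=> p_pr; set g := gcdz (gcdz u b) c.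
have [/eqP | g_neq0] := eqVneq g 0.
  rewrite !gcdz_eq0 => /andP[/andP[/eqP-> /eqP->] /eqP->].
  exists 1, 0, 0; split; first ring.
  by rewrite mulr1 mul0r addr0 dvdzE /= dvdn1; apply: contraTN p_pr => /eqP->.
have g_dvd_u : (g %| u)%Z := dvdz_trans (dvdz_gcdl _ _) (dvdz_gcdl _ _).
have g_dvd_b : (g %| b)%Z := dvdz_trans (dvdz_gcdl _ _) (dvdz_gcdr _ _).
have g_dvd_c : (g %| c)%Z := dvdz_gcdr _ _.
set u' := (u %/ g)%Z; set b' := (b %/ g)%Z; set c' := (c %/ g)%Z.
have uE : u = u' * g by rewrite divzK.
have bE : b = b' * g by rewrite divzK.
have cE : c = c' * g by rewrite divzK.
have [|x [y [z [eq_xyz Q_ndvd]]]] := @exists_nondegenerate_solution_primitive p u' b' c' p_pr.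
  apply/and3P => -[p_dvd_u' p_dvd_b' p_dvd_c'].
  have : (p%:Z * g %| 1 * gcdz (gcdz u b) c)%Z.
    by rewrite mul1r !dvdz_gcd uE bE cE !dvdz_mul2r // p_dvd_u' p_dvd_b'.
  by rewrite -/g dvdz_mul2r // dvdzE /= dvdn1 => /eqP p1; rewrite p1 in p_pr.
exists x, y, z; split=> //.
rewrite uE bE cE.
have -> : u' * g * x + c' * g * y + b' * g * z = (u' * x + c' * y + b' * z) * g by ring.
by rewrite eq_xyz mul0r.
Qed.

Lemma reversible_mod_mx2_det1 p r (M : 'M[int]_2) : prime p ->
  (\det M = 1 %[mod (p ^ r)%N%:Z])%Z -> reversible_mod (p ^ r) M.
Proof.
move=> p_pr det1; rewrite (mx2_eta M) in det1 *.
have [x [y [z [eq_xyz Q_ndvd]]]] :=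
  exists_nondegenerate_solution (M ord0 ord0 - M ord_max ord_max) (M ord0 ord_max) (M ord_max ord0) p_pr.
apply: (reversible_mod_of_conj_adj (mx2_conj_adj eq_xyz) (sqr_mx2_tr0 x y z)) det1.
exact: coprimez_pexp.
Qed.

Lemma reversible_mod_2exp_Cayley_Hamilton_mx21 r (M : 'M[int]_2) :
  reversible_mod (2 ^ r.+2) M -> (\det M = -1 %[mod (2 ^ r.+1)%N%:Z])%Z ->
  mxcong (2 ^ r) (M *m M) 1%:M.
Proof.
move=> revM det_m1.
have revM' : reversible_mod (2 ^ r.+1) M.
  by apply: reversible_mod_dvd revM; rewrite dvdn_exp2l.
apply: mxcong_Cayley_Hamilton_mx21; last by apply: eqz_mod_dvdW det_m1; rewrite dvdn_exp2l.
have := reversible_mod_mx2_trace (expn_gt0 2 r.+1) revM' det_m1.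
by rewrite expnSr PoszM dvdz_mul2r.
Qed.

Theorem lemma4p11 :
  (* (a) *)
  (forall (p r : nat), prime p -> p != 2%N ->
     (forall (d : nat) (M : 'M[int]_d), reversible_mod (p ^ r) M ->
        (\det M = 1 %[mod (p ^ r)%N%:Z])%Z \/ (\det M = -1 %[mod (p ^ r)%N%:Z])%Z)
     /\
     (forall M : 'M[int]_2, reversible_mod (p ^ r) M <->
        ((\det M = 1 %[mod (p ^ r)%N%:Z])%Z \/ mxcong (p ^ r) (M *m M) 1%:M)))
  /\
  (* (b) *)
  (forall (r : nat),
     (forall (d : nat) (M : 'M[int]_d), reversible_mod (2 ^ r) M ->
        (\det M = 1 %[mod (2 ^ (r - 1))%N%:Z])%Z
        \/ (\det M = -1 %[mod (2 ^ (r - 1))%N%:Z])%Z)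
     /\
     (forall M : 'M[int]_2, (2 <= r)%N -> reversible_mod (2 ^ r) M ->
        (\det M = -1 %[mod (2 ^ (r - 1))%N%:Z])%Z ->
        mxcong (2 ^ (r - 2)) (M *m M) 1%:M)).
Proof.
split=> [p r p_pr p_odd | r].
  have pr_gt0 : (0 < p ^ r)%N by rewrite expn_gt0 prime_gt0.
  have det_pm1 d (M : 'M[int]_d) (revM : reversible_mod (p ^ r) M) :=
    sqrz_eq1_mod_pexp p_pr p_odd (reversible_mod_det_sqr pr_gt0 revM).
  split=> // M; split=> [revM | [/(reversible_mod_mx2_det1 p_pr) | /reversible_mod_of_sqr1]] //.
  have [det1 | det_m1] := det_pm1 _ M revM; [by left | right].
  apply: (mxcong_Cayley_Hamilton_mx21 _ det_m1).
  rewrite -(@dvdz_pexp_mulr p r _ 2 p_pr); last by rewrite dvdzE /= dvdn_prime2.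
  exact: reversible_mod_mx2_trace pr_gt0 revM det_m1.
split=> [d M revM | M].
  by apply: sqrz_eq1_mod_2exp; apply: reversible_mod_det_sqr revM; rewrite expn_gt0.
case: r => [|[|r]] // _; rewrite !subSS !subn0.
exact: reversible_mod_2exp_Cayley_Hamilton_mx21.
Qed.
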